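(* Let $\varepsilon,\varepsilon',\delta$ be positive constants with $3\varepsilon+\varepsilon/\delta\le\varepsilon'$, and let $(V_1,V_2,V_3)$ be an $\varepsilon$-typical $(\varepsilon,p)$-regular triple in a graph, where the density $d_{ij}p$ of each pair $(V_i,V_j)$ is at least $\delta p$. Then at most $4\varepsilon d_{23}p|V_2||V_3|$ edges between $V_2$ and $V_3$ are not $\varepsilon'$-good.
   Context: For disjoint $X,Y$, $d(X,Y)=e(X,Y)/(|X||Y|)$; $x=(1\pm a)y$ means $x\in[(1-a)y,(1+a)y]$. A pair $(X,Y)$ is $(\varepsilon,p)$-regular if $|d(X,Y)-d(X',Y')|\le\varepsilon p$ for all $X'\subset X,Y'\subset Y$ with $|X'|\ge\varepsilon|X|,|Y'|\ge\varepsilon|Y|$; a triple is $(\varepsilon,p)$-regular if all three pairs are. Write $d(V_i,V_j)=d_{ij}p$. For $\{i,j,k\}=\{1,2,3\}$, $v\in V_i$ is $\varepsilon$-typical if with $N_j=N(v)\cap V_j$, $N_k=N(v)\cap V_k$: $|N_j|=(1\pm\varepsilon)d_{ij}p|V_j|$, $|N_k|=(1\pm\varepsilon)d_{ik}p|V_k|$, and there exist $N_j'\subset N_j,N_k'\subset N_k$ with $|N_j'|\ge(1-\varepsilon)|N_j|,|N_k'|\ge(1-\varepsilon)|N_k|$ such that $(N_j',N_k')$ is $(\varepsilon,p)$-regular of density $(1\pm\varepsilon)d_{jk}p$. The triple is $\varepsilon$-typical if it is $(\varepsilon,p)$-regular and for each $i$ all but at most $\varepsilon|V_i|$ vertices of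 $V_i$ are $\varepsilon$-typical. An edge between $V_2$ and $V_3$ is $\varepsilon'$-good if its endpoints have at least $(1-\varepsilon')d_{12}d_{13}p^2|V_1|$ common neighbours in $V_1$. *)

From mathcomp Require Import all_boot all_order all_algebra.
Set Implicit Arguments. Unset Strict Implicit. Unset Printing Implicit Defensive.
Import Order.TTheory GRing.Theory Num.Theory.
Local Open Scope ring_scope.

(* A graph is a relation adj on a finite type T (assumed symmetric and
   irreflexive in the theorem). *)

Definition edges (T : finType) (adj : rel T) (X Y : {set T}) : nat :=
  #|[set uv : T * T | [&& uv.1 \in X, uv.2 \in Y & adj uv.1 uv.2]]|.

Definition dens (R : realFieldType) (T : finType) (adj : rel T)
  (X Y : {set T}) : R :=
  (edges adj X Y)%:R / (#|X| * #|Y|)%:R.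

(* x = (1 +- a) y *)
Definition pm (R : realFieldType) (x a y : R) : bool :=
  ((1 - a) * y <= x) && (x <= (1 + a) * y).

Definition reg_pair (R : realFieldType) (T : finType) (adj : rel T)
  (eps p : R) (X Y : {set T}) : Prop :=
  forall X' Y' : {set T}, X' \subset X -> Y' \subset Y ->
    eps * #|X|%:R <= #|X'|%:R -> eps * #|Y|%:R <= #|Y'|%:R ->
    `|dens R adj X Y - dens R adj X' Y'| <= eps * p.

Definition reg_triple (R : realFieldType) (T : finType) (adj : rel T)
  (eps p : R) (V1 V2 V3 : {set T}) : Prop :=
  [/\ reg_pair adj eps p V1 V2, reg_pair adj eps p V1 V3
    & reg_pair adj eps p V2 V3].

Definition nbhd (T : finType) (adj : rel T) (v : T) : {set T} :=
  [set u | adj v u].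

(* v in Vi is eps-typical, where {Vi,Vj,Vk} = {V1,V2,V3}.
   Note d_ij p = d(Vi,Vj). *)
Definition typical_vertex (R : realFieldType) (T : finType) (adj : rel T)
  (eps p : R) (Vi Vj Vk : {set T}) (v : T) : Prop :=
  let Nj := nbhd adj v :&: Vj in
  let Nk := nbhd adj v :&: Vk in
  [/\ pm (#|Nj|%:R) eps (dens R adj Vi Vj * #|Vj|%:R),
      pm (#|Nk|%:R) eps (dens R adj Vi Vk * #|Vk|%:R) &
      (exists Nj' Nk' : {set T},
        [/\ Nj' \subset Nj, Nk' \subset Nk,
            ((1 - eps) * #|Nj|%:R <= #|Nj'|%:R) /\
            ((1 - eps) * #|Nk|%:R <= #|Nk'|%:R),
            reg_pair adj eps p Nj' Nk' &
            pm (dens R adj Nj' Nk') eps (dens R adj Vj Vk)])].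

Definition mostly_typical (R : realFieldType) (T : finType) (adj : rel T)
  (eps p : R) (Vi Vj Vk : {set T}) : Prop :=
  exists S : {set T}, [/\ S \subset Vi, #|S|%:R <= eps * #|Vi|%:R &
    forall v, v \in Vi :\: S -> typical_vertex adj eps p Vi Vj Vk v].

Definition typical_triple (R : realFieldType) (T : finType) (adj : rel T)
  (eps p : R) (V1 V2 V3 : {set T}) : Prop :=
  [/\ reg_triple adj eps p V1 V2 V3,
      mostly_typical adj eps p V1 V2 V3,
      mostly_typical adj eps p V2 V1 V3 &
      mostly_typical adj eps p V3 V1 V2].

Definition good_edge (R : realFieldType) (T : finType) (adj : rel T)
  (eps' : R) (V1 V2 V3 : {set T}) (u w : T) : bool :=
  (1 - eps') * dens R adj V1 V2 * dens R adj V1 V3 * #|V1|%:R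
    <= #|nbhd adj u :&: nbhd adj w :&: V1|%:R.

From mathcomp Require Import all_boot all_order all_algebra.
From mathcomp Require Import ring lra.
Import Order.TTheory GRing.Theory Num.Theory.
Local Open Scope ring_scope.

(* If [uw] is a bad edge with [u] typical in [V2], then [w] is a vertex of
   [N3'] with fewer than about [d12 d13 |V1|] neighbours in the large set
   [N1' ⊆ N(u) ∩ V1]; regularity of [(N1', N3')] allows at most an
   [eps]-fraction of [N3'] to be such vertices, so [u] lies on at most
   [2 eps |N(u) ∩ V3|] bad edges.  Atypical vertices of [V2] contribute at most
   their degree, and since typical vertices carry almost all of [e(V2, V3)]
   the total is at most [4 eps e(V2, V3)]. *)

Lemma card_pairs_sum (T : finType) (A : {set T}) (P : rel T) :
  #|[set uw : T * T | (uw.1 \in A) && P uw.1 uw.2]|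
    = (\sum_(u in A) #|[set w | P u w]|)%N.
Proof.
rewrite -sum1_card.
rewrite (eq_bigl (fun uw : T * T => (uw.1 \in A) && P uw.1 uw.2)); last first.
  by move=> uw; rewrite inE.
rewrite -(pair_big_dep (fun u => u \in A) P (fun _ _ => 1%N)).
by apply: eq_bigr => u _; rewrite -sum1_card; apply: eq_bigl => w; rewrite inE.
Qed.

Lemma one_sub3_le_mul_sqr (R : realFieldType) (e a : R) :
  0 <= e -> 0 <= a -> e + a <= 1 -> 1 - 3 * e - a <= (1 - e - a) * (1 - e) ^+ 2.
Proof. by move=> *; rewrite expr2; nra. Qed.

Lemma one_sub4_le_mul_sqr (R : realFieldType) (e : R) :
  0 <= e -> 2 * e <= 1 -> 1 - 4 * e <= (1 - 2 * e) * (1 - e) ^+ 2.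
Proof.
move=> e_ge0 e_le; have : 0 <= e * e * (5 - 2 * e).
  by apply: mulr_ge0; [exact: mulr_ge0 | lra].
by rewrite expr2; nra.
Qed.

Lemma sum_le_with_exceptions {R : realFieldType} {I : finType} {A S : {set I}}
    {f g : I -> R} {e c : R} :
  0 <= e -> 2 * e <= 1 -> 0 <= c -> S \subset A -> #|S|%:R <= e * #|A|%:R ->
  (forall i, i \in A -> f i <= g i) ->
  (forall i, i \in A :\: S -> f i <= 2 * e * g i) ->
  (forall i, i \in A :\: S -> (1 - e) * c <= g i) ->
  \sum_(i in A) g i = c * #|A|%:R ->
  \sum_(i in A) f i <= 4 * e * c * #|A|%:R.
Proof.
move=> e_ge0 e_le c_ge0 sSA S_small f_le_g f_small g_big sum_g.
rewrite (big_setID S) /=; rewrite (big_setID S) /= in sum_g.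
set G1 := \sum_(i in A :&: S) g i in sum_g.
set G2 := \sum_(i in A :\: S) g i in sum_g.
have F1 : \sum_(i in A :&: S) f i <= G1 by apply: ler_sum => i /setIP[/f_le_g].
have F2 : \sum_(i in A :\: S) f i <= 2 * e * G2.
  by rewrite /G2 mulr_sumr; apply: ler_sum.
have G2_ge : (1 - e) * c * #|A :\: S|%:R <= G2.
  by rewrite /G2 mulr_natr -sumr_const; apply: ler_sum.
have AS_ge : (1 - e) * #|A|%:R <= #|A :\: S|%:R.
  by rewrite cardsD (setIidPr sSA) natrB ?subset_leq_card //; lra.
have G2_ge' : (1 - 2 * e) * ((1 - e) * c * ((1 - e) * #|A|%:R)) <= (1 - 2 * e) * G2.
  apply: ler_wpM2l; first lra.
  by apply: le_trans G2_ge; apply: ler_wpM2l => //; apply: mulr_ge0 => //; lra.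
have loss : (1 - 4 * e) * (c * #|A|%:R) <= (1 - 2 * e) * (1 - e) ^+ 2 * (c * #|A|%:R).
  by apply: ler_wpM2r; [apply: mulr_ge0 => //; exact: ler0n | exact: one_sub4_le_mul_sqr].
rewrite expr2 in loss; lra.
Qed.

Lemma card_le_of_sparse_large_subset (R : realFieldType) (T : finType)
    (A B C : {set T}) (e : R) :
  0 <= e -> e <= 1 -> A \subset C -> B \subset C ->
  (1 - e) * #|C|%:R <= #|B|%:R -> #|A :&: B|%:R <= e * #|B|%:R ->
  #|A|%:R <= 2 * e * #|C|%:R.
Proof.
move=> e_ge0 e_le1 sAC sBC B_large AB_sparse.
have A_le : #|A|%:R <= #|A :&: B|%:R + (#|C|%:R - #|B|%:R) :> R.
  rewrite -natrB ?subset_leq_card // -natrD ler_nat.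
  rewrite -(cardsID B A) leq_add2l -{2}(setIidPr sBC) -cardsD.
  exact/subset_leq_card/setSD.
have B_large2 : (1 - e) * ((1 - e) * #|C|%:R) <= (1 - e) * #|B|%:R.
  by apply: ler_wpM2l => //; lra.
have : 0 <= e * e * #|C|%:R by rewrite !mulr_ge0.
nra.
Qed.

Section Counting.

Variables (R : realFieldType) (T : finType) (adj : rel T).
Implicit Types (X Y : {set T}).

Lemma edges_sum_nbhd X Y : edges adj X Y = (\sum_(x in X) #|nbhd adj x :&: Y|)%N.
Proof.
rewrite /edges (card_pairs_sum _ X (fun u w => (w \in Y) && adj u w)).
by apply: eq_bigr => x _; apply: eq_card => w; rewrite !inE andbC.
Qed.

Lemma edges_le_mul X Y : (edges adj X Y <= #|X| * #|Y|)%N.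
Proof.
rewrite -cardsX; apply: subset_leq_card; apply/subsetP => -[x y].
by rewrite !inE /= => /and3P[-> -> _].
Qed.

Lemma edgesC X Y : symmetric adj -> edges adj X Y = edges adj Y X.
Proof.
move=> sym; rewrite /edges.
rewrite -(card_imset _ (@inv_inj _ (fun uw : T * T => (uw.2, uw.1)) _)); last by case.
apply: eq_card => -[a b]; apply/imsetP/idP.
  by case=> -[c d]; rewrite inE /= => /and3P[h1 h2 h3] [-> ->]; rewrite inE /= h1 h2 sym h3.
rewrite inE /= => /and3P[h1 h2 h3]; exists (b, a) => //; by rewrite inE /= h1 h2 sym h3.
Qed.

Lemma densC X Y : symmetric adj -> dens R adj X Y = dens R adj Y X.
Proof. by move=> sym; rewrite /dens edgesC // mulnC. Qed.

Lemma dens_ge0 X Y : 0 <= dens R adj X Y.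
Proof. by rewrite /dens divr_ge0. Qed.

(* Also holds for empty [X] or [Y], where both sides are [0]. *)
Lemma natr_edges X Y :
  (edges adj X Y)%:R = dens R adj X Y * #|X|%:R * #|Y|%:R.
Proof.
rewrite /dens -mulrA -natrM; have [XY0|XYpos] := posnP (#|X| * #|Y|).
  by move: (edges_le_mul X Y); rewrite XY0 leqn0 => /eqP->; rewrite !mulr0.
by rewrite divfK // pnatr_eq0 -lt0n.
Qed.

(* Otherwise the low-degree vertices would span a large subpair that is too
   sparse for regularity. *)
Lemma regular_few_low_degree {eps p t : R} {X Y B : {set T}} :
  symmetric adj -> 0 <= eps <= 1 -> reg_pair adj eps p X Y -> B \subset Y ->
  t <= (dens R adj X Y - eps * p) * #|X|%:R ->
  (forall w, w \in B -> #|nbhd adj w :&: X|%:R < t) ->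
  #|B|%:R <= eps * #|Y|%:R.
Proof.
move=> sym /andP[eps0 eps1] reg sBY t_le low; rewrite leNgt; apply/negP => manyB.
have B_gt0 : (0 < #|B|)%N.
  by rewrite -(ltr0n R); apply: le_lt_trans manyB; apply: mulr_ge0.
have := reg X B (subxx X) sBY (ler_piMl (ler0n _ _) eps1) (ltW manyB).
rewrite ler_distlC => /andP[dens_XB _].
have edges_lt : (edges adj X B)%:R < #|B|%:R * t.
  rewrite edgesC // edges_sum_nbhd natr_sum mulr_natl -sumr_const.
  apply: ltr_sum => [|w /low //].
  by case/card_gt0P: B_gt0 => w Bw; apply/hasP; exists w => //; apply: mem_index_enum.
have edges_ge : #|B|%:R * t <= (edges adj X B)%:R.
  rewrite natr_edges mulrC.
  apply: ler_wpM2r; first exact: ler0n.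
  by apply: (le_trans t_le); apply: ler_wpM2r; first exact: ler0n.
by move: (lt_le_trans edges_lt edges_ge); rewrite ltxx.
Qed.

Lemma good_edge_ge1 (eps' : R) (V1 V2 V3 : {set T}) u w :
  1 <= eps' -> good_edge adj eps' V1 V2 V3 u w.
Proof.
move=> eps'_ge1; rewrite /good_edge.
set D := dens R adj V1 V2 * dens R adj V1 V3 * #|V1|%:R.
have D_ge0 : 0 <= D by apply: mulr_ge0; [apply: mulr_ge0; apply: dens_ge0 | apply: ler0n].
apply: (@le_trans _ _ ((1 - eps') * D)); first by rewrite /D !mulrA.
by apply: le_trans (ler0n _ _); rewrite mulr_le0_ge0 //; lra.
Qed.

Definition bad_nbhd (eps' : R) (V1 V2 V3 : {set T}) (u : T) : {set T} :=
  [set w | [&& w \in V3, adj u w & ~~ good_edge adj eps' V1 V2 V3 u w]].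

Lemma bad_nbhd_sub (eps' : R) (V1 V2 V3 : {set T}) u :
  bad_nbhd eps' V1 V2 V3 u \subset nbhd adj u :&: V3.
Proof. by apply/subsetP => w; rewrite !inE => /and3P[-> -> _]. Qed.

Lemma typical_card_bad_nbhd (eps eps' delta p : R) (V1 V2 V3 : {set T}) u :
  symmetric adj -> 0 < eps -> 0 < delta -> 0 < p -> eps' < 1 ->
  3 * eps + eps / delta <= eps' ->
  delta * p <= dens R adj V1 V2 -> delta * p <= dens R adj V1 V3 ->
  typical_vertex adj eps p V2 V1 V3 u ->
  #|bad_nbhd eps' V1 V2 V3 u|%:R <= 2 * eps * #|nbhd adj u :&: V3|%:R.
Proof.
move=> sym eps_gt0 delta_gt0 p_gt0 eps'_lt1 eps_small d12_ge d13_ge.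
case=> /andP[N1_ge _] _.
case=> [N1' [N3' [sN1' sN3' [N1'_ge N3'_ge] reg /andP[D_ge _]]]].
rewrite densC // in N1_ge.
set d12 := dens R adj V1 V2 in d12_ge N1_ge *.
set d13 := dens R adj V1 V3 in d13_ge D_ge *.
set a := eps / delta in eps_small.
set N3 := nbhd adj u :&: V3 in sN3' N3'_ge *.
set Bad := bad_nbhd eps' V1 V2 V3 u.
have a_ge0 : 0 <= a by rewrite divr_ge0 // ltW.
have dp_gt0 : 0 < delta * p by apply: mulr_gt0.
have eps_p_le : eps * p <= a * d13.
  have -> : eps * p = a * (delta * p) by rewrite /a mulrA divfK // gt_eqF.
  exact: ler_wpM2l.
have low w : w \in Bad :&: N3' ->
    #|nbhd adj w :&: N1'|%:R < (1 - eps') * d12 * d13 * #|V1|%:R.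
  rewrite !inE => /andP[/and3P[_ _ bad] _]; rewrite /good_edge -ltNge in bad.
  apply: le_lt_trans bad; rewrite ler_nat; apply: subset_leq_card.
  apply/subsetP => x; rewrite !inE => /andP[wx N1'x].
  by move/subsetP: sN1' => /(_ x N1'x); rewrite !inE => /andP[-> ->]; rewrite wx.
have threshold : (1 - eps') * d12 * d13 * #|V1|%:R
    <= (dens R adj N1' N3' - eps * p) * #|N1'|%:R.
  have d12v_ge0 : 0 <= d12 * #|V1|%:R by apply: mulr_ge0; [lra | exact: ler0n].
  have D_gap : (1 - eps - a) * d13 <= dens R adj N1' N3' - eps * p by lra.
  have N1'_big : (1 - eps) ^+ 2 * (d12 * #|V1|%:R) <= #|N1'|%:R.
    rewrite expr2 -mulrA; apply: le_trans N1'_ge; apply: ler_wpM2l; lra.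
  have d123_ge0 : 0 <= d12 * d13 * #|V1|%:R.
    by apply: mulr_ge0; [apply: mulr_ge0; lra | exact: ler0n].
  apply: (@le_trans _ _ (((1 - eps - a) * d13) * ((1 - eps) ^+ 2 * (d12 * #|V1|%:R)))).
    have -> : (1 - eps') * d12 * d13 * #|V1|%:R = (1 - eps') * (d12 * d13 * #|V1|%:R) by ring.
    have -> : (1 - eps - a) * d13 * ((1 - eps) ^+ 2 * (d12 * #|V1|%:R))
      = (1 - eps - a) * (1 - eps) ^+ 2 * (d12 * d13 * #|V1|%:R) by ring.
    apply: ler_wpM2r => //; have := @one_sub3_le_mul_sqr R eps a; lra.
  apply: ler_pM => //; [apply: mulr_ge0; lra | exact: mulr_ge0 (sqr_ge0 _) _].
apply: card_le_of_sparse_large_subset N3'_ge _ => //; [lra | lra | | ].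
- exact: bad_nbhd_sub.
- apply: (regular_few_low_degree sym _ reg (subsetIr Bad N3') threshold low).
  by rewrite ltW //=; lra.
Qed.

End Counting.

Theorem proposition2p12 (R : realFieldType) (T : finType) (adj : rel T)
  (eps eps' delta p : R) (V1 V2 V3 : {set T}) :
  symmetric adj -> irreflexive adj ->
  [disjoint V1 & V2] -> [disjoint V1 & V3] -> [disjoint V2 & V3] ->
  0 < eps -> 0 < eps' -> 0 < delta -> 0 < p ->
  3 * eps + eps / delta <= eps' ->
  typical_triple adj eps p V1 V2 V3 ->
  delta * p <= dens R adj V1 V2 ->
  delta * p <= dens R adj V1 V3 ->
  delta * p <= dens R adj V2 V3 ->
  (#|[set uw : T * T | [&& uw.1 \in V2, uw.2 \in V3, adj uw.1 uw.2
        & ~~ good_edge adj eps' V1 V2 V3 uw.1 uw.2]]|)%:R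
    <= 4 * eps * dens R adj V2 V3 * #|V2|%:R * #|V3|%:R.
Proof.
move=> sym _ _ _ _ eps_gt0 _ delta_gt0 p_gt0 eps_small.
case=> _ _ [S [sS S_small typS]] _ d12_ge d13_ge _.
have [eps'_ge1 | eps'_lt1] := leP 1 eps'.
  rewrite (_ : [set uw | _] = set0) ?cards0.
    do 2 (apply: mulr_ge0; last exact: ler0n).
    by apply: mulr_ge0; [lra | exact: dens_ge0].
  by apply/setP => uw; rewrite !inE good_edge_ge1 // !andbF.
have a_ge0 : 0 <= eps / delta by rewrite divr_ge0 // ltW.
rewrite (card_pairs_sum _ V2
  (fun u w => [&& w \in V3, adj u w & ~~ good_edge adj eps' V1 V2 V3 u w])) natr_sum.
have -> : 4 * eps * dens R adj V2 V3 * #|V2|%:R * #|V3|%:R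
    = 4 * eps * (dens R adj V2 V3 * #|V3|%:R) * #|V2|%:R by ring.
apply: (sum_le_with_exceptions (g := fun u => #|nbhd adj u :&: V3|%:R) _ _ _ sS S_small).
- by rewrite ltW.
- lra.
- by rewrite mulr_ge0 ?dens_ge0 ?ler0n.
- by move=> u _; rewrite ler_nat subset_leq_card ?bad_nbhd_sub.
- move=> u /typS.
  exact: typical_card_bad_nbhd sym eps_gt0 delta_gt0 p_gt0 eps'_lt1 eps_small d12_ge d13_ge.
- by move=> u /typS [_ /andP[]].
- by rewrite -natr_sum -edges_sum_nbhd natr_edges mulrAC.
Qed.
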